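(* Let $G$ be a finitely generated pro-$p$ group, $g\in G$ and $k\in \mathbb{N}$. Let $N$ be the closed normal subgroup of $G$ generated by $g^{p^k}$ and $\overline G=G/N$. Then $\operatorname{rg}(\overline G)\ge \operatorname{rg}(G)-\frac{1}{p^k}$.
   Context: For a finitely generated pro-$p$ group $G$, the rank gradient is $\operatorname{rg}(G)=\lim_{i\to\infty}\frac{d(U_i)}{|G:U_i|}=\inf_{U\lhd_o G}\frac{d(U)}{|G:U|}$, where $G>U_1>U_2>\ldots$ is any chain of open normal subgroups with trivial intersection and $d(\cdot)$ is the minimal number of generators (equal to $\dim_{\mathbb{F}_p}{\rm H}_1(\cdot;\mathbb{F}_p)$); it is independent of the chain. *)

(* Abstract (possibly infinite) topological groups
   are set up by hand: a group law on the carrier of a topologicalType. *)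
From HB Require Import structures.
From mathcomp Require Import all_boot all_order all_algebra.
From mathcomp Require Import all_classical all_reals all_analysis.
From mathcomp Require Import Rstruct Rstruct_topology.
Set Implicit Arguments. Unset Strict Implicit. Unset Printing Implicit Defensive.
Import Order.TTheory GRing.Theory Num.Theory.
Local Open Scope classical_set_scope.
Local Open Scope ring_scope.

Record group_law (T : Type) := GroupLaw {
  gmul : T -> T -> T;
  ginv : T -> T;
  gone : T;
  gmulA : forall x y z, gmul x (gmul y z) = gmul (gmul x y) z;
  gmul1 : forall x, gmul x gone = x;
  g1mul : forall x, gmul gone x = x;
  gmulV : forall x, gmul x (ginv x) = gone;
  gVmul : forall x, gmul (ginv x) x = gone }.

Section GroupDefs.
Context {T : topologicalType} (L : group_law T).
Local Notation "x * y" := (gmul L x y).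
Local Notation "x ^-1" := (ginv L x).
Local Notation "1" := (gone L).

Fixpoint gpow (x : T) (n : nat) : T :=
  match n with O => 1 | S m => x * gpow x m end.

Definition is_subgroup (H : set T) : Prop :=
  H 1 /\ (forall x y, H x -> H y -> H (x * y)) /\ (forall x, H x -> H (x^-1)).

Definition is_normal_subgroup (H : set T) : Prop :=
  is_subgroup H /\ (forall x h, H h -> H (x^-1 * h * x)).

Definition gen_subgroup (A : set T) : set T :=
  \bigcap_(H in [set H | is_subgroup H /\ A `<=` H]) H.

Definition closed_normal_closure (A : set T) : set T :=
  \bigcap_(H in [set H | is_normal_subgroup H /\ closed H /\ A `<=` H]) H.

Definition top_generated_by (U : set T) (s : seq T) : Prop :=
  {subset s <= U} /\ closure (gen_subgroup [set x | x \in s]) = U.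

Definition top_finitely_generated : Prop :=
  exists s : seq T, top_generated_by setT s.

(* H has index n in G: there is a list of n left coset representatives *)
Definition has_index (H : set T) (n : nat) : Prop :=
  exists s : seq T, size s = n /\
    (forall i j, (i < n)%N -> (j < n)%N ->
        H ((nth 1 s i)^-1 * nth 1 s j) -> i = j) /\
    (forall x, exists2 i, (i < n)%N & H ((nth 1 s i)^-1 * x)).

Definition is_topological_group : Prop :=
  continuous (fun xy : T * T => xy.1 * xy.2) /\ continuous (ginv L).

Definition pro_p_group (p : nat) : Prop :=
  [/\ is_topological_group, compact (@setT T), hausdorff_space T,
      totally_disconnected (@setT T) &
      forall U : set T, open U -> is_normal_subgroup U ->
        exists e : nat, has_index U (p ^ e)%N].

Definition dgen (U : set T) : Rdefinitions.R :=
  inf [set (n%:R : Rdefinitions.R) | n in [set n : nat | exists s : seq T,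
        size s = n /\ top_generated_by U s]].

Definition index (U : set T) : Rdefinitions.R :=
  inf [set (n%:R : Rdefinitions.R) | n in [set n : nat | has_index U n]].

Definition rank_gradient : Rdefinitions.R :=
  inf [set dgen U / index U | U in [set U : set T | open U /\ is_normal_subgroup U]].

End GroupDefs.

Definition is_group_hom {T1 T2 : Type} (L1 : group_law T1) (L2 : group_law T2)
  (f : T1 -> T2) : Prop :=
  forall x y, f (gmul L1 x y) = gmul L2 (f x) (f y).

(* Let Ub be an open normal subgroup of Q, U its preimage in G and p^e their
   common index.  As rg(G) <= d(U)/p^e, it suffices to show
   d(U) <= d(Ub) + p^(e-k).  Lifting generators of Ub gives a list u with
   U = closure<u> N, where N is the closed normal closure of h = g^(p^k).  If g
   has order less than p^k modulo U, every conjugate of h is a p-th power of an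
   element of U; otherwise every conjugate of h is U-conjugate to one of a list c
   of at most p^(e-k) conjugates.  In each finite quotient P of U, the image K
   of <u ++ c> then satisfies P = K Phi(P), hence P = K: so <u ++ c> is dense
   in U. *)

Set Warnings "-notation-overridden -ambiguous-paths -notation-incompatible-prefix".
From Pilot Require Import Defs.
From mathcomp Require Import all_boot all_order all_algebra all_fingroup all_solvable.
From mathcomp Require Import all_classical all_reals all_analysis.
From mathcomp Require Import Rstruct Rstruct_topology.
Set Implicit Arguments. Unset Strict Implicit. Unset Printing Implicit Defensive.
Import Order.TTheory GRing.Theory Num.Theory.
Local Open Scope classical_set_scope.
Local Open Scope ring_scope.

Section GroupLaw.
Context {T : topologicalType} (L : group_law T).
Local Notation "x * y" := (gmul L x y).
Local Notation "x ^-1" := (ginv L x).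
Local Notation "1" := (gone L).

Definition gconj (x z : T) : T := z^-1 * (x * z).

Lemma gmulKg x y : x^-1 * (x * y) = y.
Proof. by rewrite gmulA gVmul g1mul. Qed.

Lemma gmulKVg x y : x * (x^-1 * y) = y.
Proof. by rewrite gmulA gmulV g1mul. Qed.

Lemma gmulgK x y : (y * x) * x^-1 = y.
Proof. by rewrite -gmulA gmulV gmul1. Qed.

Lemma gmulI x : injective (gmul L x).
Proof. by move=> y z /(congr1 (gmul L x^-1)); rewrite !gmulKg. Qed.

Lemma ginv_uniq x y : x * y = 1 -> y = x^-1.
Proof. by move=> xy1; apply: (@gmulI x); rewrite xy1 gmulV. Qed.

Lemma ginvK x : (x^-1)^-1 = x.
Proof. by symmetry; apply: ginv_uniq; rewrite gVmul. Qed.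

Lemma ginvM x y : (x * y)^-1 = y^-1 * x^-1.
Proof. by symmetry; apply: ginv_uniq; rewrite gmulA gmulgK gmulV. Qed.

Lemma ginv1 : 1^-1 = 1.
Proof. by symmetry; apply: ginv_uniq; rewrite gmul1. Qed.

Lemma gpowD x a b : gpow L x (a + b) = gpow L x a * gpow L x b.
Proof. by elim: a => [|a IH]; rewrite ?add0n ?g1mul // addSn /= IH gmulA. Qed.

Lemma gpowM x a b : gpow L x (a * b) = gpow L (gpow L x a) b.
Proof. by elim: b => [|b IH]; rewrite ?muln0 // mulnS gpowD IH. Qed.

Lemma gpowC x a b : gpow L x a * gpow L x b = gpow L x b * gpow L x a.
Proof. by rewrite -!gpowD addnC. Qed.

Lemma gconj1 x : gconj x 1 = x.
Proof. by rewrite /gconj ginv1 gmul1 g1mul. Qed.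

Lemma gconjM x y z : gconj (x * y) z = gconj x z * gconj y z.
Proof. by rewrite /gconj !gmulA gmulgK. Qed.

Lemma gconjJ x y z : gconj x (y * z) = gconj (gconj x y) z.
Proof. by rewrite /gconj ginvM !gmulA. Qed.

Lemma gconjV x z : gconj x^-1 z = (gconj x z)^-1.
Proof. by rewrite /gconj !ginvM ginvK gmulA. Qed.

Lemma gconj_pow x z n : gconj (gpow L x n) z = gpow L (gconj x z) n.
Proof.
elim: n => [|n IH] /=; first by rewrite /gconj g1mul gVmul.
by rewrite gconjM IH.
Qed.

Lemma gconj_commute x z : x * z = z * x -> gconj x z = x.
Proof. by move=> xz; rewrite /gconj xz gmulKg. Qed.

End GroupLaw.

Section Subgroups.
Context {T : topologicalType} (L : group_law T).
Local Notation "x * y" := (gmul L x y).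
Local Notation "x ^-1" := (ginv L x).
Local Notation "1" := (gone L).
Implicit Types H : set T.

Lemma subgroup1 H : is_subgroup L H -> H 1.
Proof. by case. Qed.

Lemma subgroupM H x y : is_subgroup L H -> H x -> H y -> H (x * y).
Proof. by case=> _ [+ _]; apply. Qed.

Lemma subgroupV H x : is_subgroup L H -> H x -> H x^-1.
Proof. by case=> _ [_]; apply. Qed.

Lemma subgroupVr H x : is_subgroup L H -> H x^-1 -> H x.
Proof. by move=> sH /(subgroupV sH); rewrite ginvK. Qed.

Lemma subgroup_pow H x n : is_subgroup L H -> H x -> H (gpow L x n).
Proof.
by move=> sH Hx; elim: n => [|n IH] /=; [apply: subgroup1|apply: subgroupM].
Qed.

Lemma subgroup_divr H a b c :
  is_subgroup L H -> H (a^-1 * b) -> H (c^-1 * b) -> H (a^-1 * c).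
Proof.
move=> sH ab cb; have := subgroupM sH ab (subgroupV sH cb).
by rewrite ginvM ginvK gmulA gmulgK.
Qed.

Lemma subgroup_divl H a b c :
  is_subgroup L H -> H (a^-1 * b) -> H (a^-1 * c) -> H (b^-1 * c).
Proof.
move=> sH ab ac; have := subgroupM sH (subgroupV sH ab) ac.
by rewrite ginvM ginvK -gmulA gmulKVg.
Qed.

Lemma normal_gconj H x z : is_normal_subgroup L H -> H x -> H (gconj L x z).
Proof. by case=> _ /(_ z x) nH /nH; rewrite /gconj gmulA. Qed.

Lemma setT_subgroup : is_subgroup L setT.
Proof. by []. Qed.

Lemma gen_subgroup_subgroup A : is_subgroup L (gen_subgroup L A).
Proof.
split; first by move=> H [sH _]; apply: subgroup1.
split; first by move=> x y Ax Ay H AH; apply: subgroupM AH.1 (Ax H AH) (Ay H AH).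
by move=> x Ax H AH; apply: subgroupV AH.1 (Ax H AH).
Qed.

Lemma sub_gen_subgroup A : A `<=` gen_subgroup L A.
Proof. by move=> x Ax H [_ /(_ x Ax)]. Qed.

Lemma gen_subgroup_min A H : is_subgroup L H -> A `<=` H -> gen_subgroup L A `<=` H.
Proof. by move=> sH AH x; apply. Qed.

Lemma gen_subgroupS A B : A `<=` B -> gen_subgroup L A `<=` gen_subgroup L B.
Proof.
move=> AB; apply: gen_subgroup_min; first exact: gen_subgroup_subgroup.
exact: subset_trans (@sub_gen_subgroup B).
Qed.

End Subgroups.

Section Homomorphisms.
Context {T1 T2 : topologicalType} (L1 : group_law T1) (L2 : group_law T2).
Variable f : T1 -> T2.
Hypothesis fM : is_group_hom L1 L2 f.

Lemma hom1 : f (gone L1) = gone L2.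
Proof. by apply: (@gmulI _ L2 (f (gone L1))); rewrite -fM !gmul1. Qed.

Lemma homV x : f (ginv L1 x) = ginv L2 (f x).
Proof. by apply: ginv_uniq; rewrite -fM gmulV hom1. Qed.

Lemma preimage_subgroup H : is_subgroup L2 H -> is_subgroup L1 (f @^-1` H).
Proof.
move=> sH; split; first by rewrite /= hom1; apply: subgroup1.
split; first by move=> x y; rewrite /= fM; apply: subgroupM.
by move=> x; rewrite /= homV; apply: subgroupV.
Qed.

Lemma preimage_normal H : is_normal_subgroup L2 H -> is_normal_subgroup L1 (f @^-1` H).
Proof.
move=> [sH nH]; split; first exact: preimage_subgroup.
by move=> x h /=; rewrite !fM homV; apply: nH.
Qed.

Lemma image_subgroup H : is_subgroup L1 H -> is_subgroup L2 (f @` H).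
Proof.
move=> sH; split; first by exists (gone L1); [apply: subgroup1|apply: hom1].
split.
  move=> _ _ [x Hx <-] [y Hy <-].
  by exists (gmul L1 x y); [apply: subgroupM|apply: fM].
by move=> _ [x Hx <-]; exists (ginv L1 x); [apply: subgroupV|apply: homV].
Qed.

Lemma image_gen_subgroup A : f @` gen_subgroup L1 A `<=` gen_subgroup L2 (f @` A).
Proof.
move=> _ [x Ax <-]; apply: (gen_subgroup_min (preimage_subgroup (gen_subgroup_subgroup _ _))) Ax.
by move=> y Ay; apply: sub_gen_subgroup; exists y.
Qed.

Lemma gen_subgroup_image A : gen_subgroup L2 (f @` A) `<=` f @` gen_subgroup L1 A.
Proof.
apply: gen_subgroup_min; first exact/image_subgroup/gen_subgroup_subgroup.
by move=> _ [x Ax <-]; exists x => //; apply: sub_gen_subgroup.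
Qed.

End Homomorphisms.

Section TopologicalGroup.
Context {T : topologicalType} (L : group_law T).
Local Notation "x * y" := (gmul L x y).
Local Notation "x ^-1" := (ginv L x).
Local Notation "1" := (gone L).
Hypothesis tg : is_topological_group L.

Lemma cvgMg {X : Type} (F : set_system X) {FF : Filter F} (f g : X -> T) a b :
  f @ F --> a -> g @ F --> b -> (fun z => f z * g z) @ F --> a * b.
Proof.
move=> fa gb; apply: (cvg_comp (fun z => (f z, g z)) _ _ (tg.1 (a, b))).
exact: cvg_pair.
Qed.

Lemma cvgVg {X : Type} (F : set_system X) {FF : Filter F} (f : X -> T) a :
  f @ F --> a -> (fun z => (f z)^-1) @ F --> a^-1.
Proof. by move=> fa; apply: (cvg_comp f (ginv L) _ (tg.2 a)). Qed.

Lemma cvg_translate (x : T) : (fun y => x^-1 * y) @ x --> 1.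
Proof.
rewrite -(gVmul L x); apply: (cvgMg (f := fun=> x^-1) (g := id)); first exact: cvg_cst.
exact: cvg_id.
Qed.

Lemma continuous_gconj z : continuous (gconj L ^~ z).
Proof.
move=> y; apply: (cvgMg (f := fun=> z^-1)); first exact: cvg_cst.
by apply: (cvgMg (f := id) (g := fun=> z)); [exact: cvg_id|exact: cvg_cst].
Qed.

Lemma nbhs1_subgroup_open H : is_subgroup L H -> nbhs 1 H -> open H.
Proof.
move=> sH H1; rewrite openE => h Hh.
have Hh1 : nbhs h [set y | H (h^-1 * y)] := cvg_translate h H1.
apply: filterS Hh1 => y /= Hy.
by rewrite -(gmulKVg L h y); apply: subgroupM.
Qed.

Lemma open_subgroup_closed H : is_subgroup L H -> open H -> closed H.
Proof.
move=> sH oH; rewrite -[H]setCK; apply: open_closedC; rewrite openE => y nHy.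
have H1 : nbhs 1 H by apply: open_nbhs_nbhs; split => //; apply: subgroup1.
have Hy1 : nbhs y [set z | H (y^-1 * z)] := cvg_translate y H1.
apply: filterS Hy1 => z /= Hz Hz'.
apply/nHy/(subgroupVr sH).
by rewrite -(gmulgK L z y^-1); apply: subgroupM sH Hz (subgroupV sH Hz').
Qed.

End TopologicalGroup.

Section ZeroDimensional.
Context {T : topologicalType}.
Hypothesis cT : compact [set: T].

Definition quasi_component (x : T) : set T :=
  \bigcap_(D in [set D : set T | clopen D /\ D x]) D.

Lemma quasi_component_refl x : quasi_component x x.
Proof. by move=> D []. Qed.

Lemma closed_quasi_component x : closed (quasi_component x).
Proof. by apply: closed_bigI => D [[]]. Qed.

Lemma clopen_sub_of_quasi_component x (O : set T) : open O -> quasi_component x `<=` O ->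
  exists D, [/\ clopen D, D x & D `<=` O].
Proof.
move=> oO QO; apply: contrapT => noD.
pose F := filter_from [set D : set T | clopen D /\ D x] (fun D => D `&` ~` O).
have FF : Filter F.
  apply: filter_from_filter; first by exists setT; split => //; exact: clopenT.
  move=> A B [clA Ax] [clB Bx]; exists (A `&` B); first by split; [exact: clopenI|].
  by move=> z [[Az Bz] nOz].
have PF : ProperFilter F.
  apply: filter_from_proper => D [clD Dx]; apply: contrapT => DO.
  by apply: noD; exists D; split => // z Dz; apply: contrapT => nOz; apply: DO; exists z.
have cO : compact (~` O) by apply: subclosed_compact cT _ => //; exact: open_closedC.
have FO : F (~` O) by exists setT; [split; [exact: clopenT|]|move=> z []].
have [y [nOy Fy]] := cO F PF FO.
have [C [[oC clC] Cx nCy]] : exists C, [/\ clopen C, C x & ~ C y].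
  apply: contrapT => noC; apply/nOy/QO => C [clC Cx].
  by apply: contrapT => Cy; apply: noC; exists C.
have FC : F (C `&` ~` O) by exists C.
have nC_nbhs : nbhs y (~` C) by apply: open_nbhs_nbhs; split; [exact: closed_openC|].
by have [z [[Cz _] nCz]] := Fy _ _ FC nC_nbhs.
Qed.

Lemma separated_closed (A B : set T) : closed (A `|` B) -> separated A B -> closed A.
Proof.
move=> clAB [AB _]; rewrite (closure_id A); apply/seteqP; split; first exact: subset_closure.
move=> z Az; have : closure (A `|` B) z by apply: closureS Az => w; left.
rewrite -(closure_id _).1 // => -[//|Bz].
by have : (closure A `&` B) z by []; rewrite AB.
Qed.

Hypothesis hT : hausdorff_space T.

(* A separation A, B of the quasi-component is widened, by normality, to an
   open U containing A whose closure misses B; a clopen neighbourhood of x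
   inside U `|` ~` closure U then yields a clopen set containing x but not B. *)
Lemma quasi_component_connected x : connected (quasi_component x).
Proof.
apply/connectedP => E [E0 QE sepE].
wlog Ex : E E0 QE sepE / E false x.
  move=> wlogE; have : (E false `|` E true) x by rewrite -QE; exact: quasi_component_refl.
  case=> Ex; first exact: wlogE.
  apply: (wlogE (fun b => E (~~ b))) => //=.
  - by rewrite setUC.
  - by rewrite separatedC.
have clQ := @closed_quasi_component x; rewrite QE in clQ.
have clA : closed (E false) by exact: separated_closed sepE.
have clB : closed (E true).
  by apply: (separated_closed (B := E false)); rewrite 1?setUC // separatedC.
have [U [oU AU clUB]] : exists U, [/\ open U, E false `<=` U & closure U `<=` ~` E true].
  have nA : set_nbhs (E false) (~` E true).
    apply/set_nbhsP; exists (~` E true); split => //; first exact: closed_openC.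
    by move=> z Az Bz; have : (E false `&` E true) z by []; rewrite separated_disjoint.
  have [C /set_nbhsP [U [oU AU UC]] clC] := compact_normal hT cT clA nA.
  by exists U; split => //; apply: subset_trans clC; apply: closureS.
have [D [[oD clD] Dx DO]] : exists D, [/\ clopen D, D x & D `<=` U `|` ~` closure U].
  apply: clopen_sub_of_quasi_component.
    by apply: openU => //; exact/closed_openC/closed_closure.
  rewrite QE => z [Az|Bz]; first by left; apply: AU.
  by right => /clUB.
have QDU : quasi_component x `<=` D `&` U.
  move=> z; apply; split; last by split => //; apply: AU.
  split; first exact: openI.
  have -> : D `&` U = D `&` closure U.
    apply/seteqP; split => w [Dw Uw]; split => //; first exact: subset_closure.
    by case: (DO w Dw).
  by apply: closedI => //; exact: closed_closure.
have [b Bb] := E0 true.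
have [_ Ub] : (D `&` U) b by apply: QDU; rewrite QE; right.
exact: clUB (subset_closure Ub) Bb.
Qed.

Hypothesis tdT : totally_disconnected [set: T].

Lemma totally_disconnected_zero_dimensional : zero_dimensional T.
Proof.
move=> x y xy; apply: contrapT => noD.
have Qy : quasi_component x y.
  by move=> D [clD Dx]; apply: contrapT => Dy; apply: noD; exists D.
have : connected_component [set: T] x y.
  exact: connected_component_max (@quasi_component_refl x) _ (@quasi_component_connected x) _ Qy.
by rewrite tdT // => yx; rewrite yx eqxx in xy.
Qed.

Lemma clopen_nbhs_sub (x : T) (W : set T) : nbhs x W -> exists D, [/\ clopen D, D x & D `<=` W].
Proof.
move=> /(zero_dimensional_cvg hT totally_disconnected_zero_dimensional cT).
by case=> D [Dx clD] DW; exists D.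
Qed.

End ZeroDimensional.

Section Profinite.
Context {T : topologicalType} (L : group_law T).
Local Notation "x * y" := (gmul L x y).
Local Notation "x ^-1" := (ginv L x).
Local Notation "1" := (gone L).
Hypothesis tg : is_topological_group L.
Hypothesis cT : compact [set: T].
Hypothesis hT : hausdorff_space T.
Hypothesis tdT : totally_disconnected [set: T].

(* Tube lemma: compactness of T * D makes the continuity at each (x, c, 1)
   uniform in (x, c). *)
Lemma nbhs1_gconj_stable (D : set T) : clopen D -> D 1 ->
  nbhs 1 [set y | forall x c, D c -> D (c * gconj L y x)].
Proof.
move=> [oD clD] D1; pose f (zy : (T * T) * T) := zy.1.2 * gconj L zy.2 zy.1.1.
have cK : compact (@setT T `*` D).
  exact: compact_setX cT (subclosed_compact clD cT (@subsetT _ D)).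
have cf z : f @ nbhs (z, 1) --> f (z, 1).
  have c11 : (fun zy : (T * T) * T => zy.1.1) @ nbhs (z, 1) --> z.1.
    exact: cvg_comp (@cvg_fst _ _ (nbhs z) (nbhs 1) _) (@cvg_fst _ _ (nbhs z.1) (nbhs z.2) _).
  have c12 : (fun zy : (T * T) * T => zy.1.2) @ nbhs (z, 1) --> z.2.
    exact: cvg_comp (@cvg_fst _ _ (nbhs z) (nbhs 1) _) (@cvg_snd _ _ (nbhs z.1) (nbhs z.2) _).
  have c2 : (fun zy : (T * T) * T => zy.2) @ nbhs (z, 1) --> 1.
    exact: (@cvg_snd _ _ (nbhs z) (nbhs 1) _).
  by apply: cvgMg => //; apply: cvgMg => //; [exact: cvgVg|exact: cvgMg].
have : \forall y \near nbhs 1, (@setT T `*` D) `<=` (fun z => D (f (z, y))).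
  apply: (iffLR (compact_near_coveringP _) cK) => z [_ Dz].
  by apply: (cf z); apply: open_nbhs_nbhs; split; rewrite // /f /= /gconj g1mul gVmul gmul1.
by apply: filterS => y Sy x c Dc; exact: (Sy (x, c)).
Qed.

Lemma open_normal_subgroup_sub (W : set T) : nbhs 1 W ->
  exists V, [/\ open V, is_normal_subgroup L V & V `<=` W].
Proof.
move=> W1; have [D [clD D1 DW]] := clopen_nbhs_sub cT hT tdT W1.
set S := [set y | forall x c, D c -> D (c * gconj L y x)].
have S1 : nbhs 1 S := nbhs1_gconj_stable clD D1.
have SD : S `<=` D by move=> y /(_ 1 1 D1); rewrite g1mul gconj1.
have SM y1 y2 : S y1 -> S y2 -> S (y1 * y2).
  by move=> Sy1 Sy2 x c Dc; rewrite gconjM gmulA; apply/Sy2/Sy1.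
have SJ y z : S y -> S (gconj L y z).
  by move=> Sy x c Dc; rewrite -gconjJ; apply: Sy.
pose V := [set y | S y /\ S y^-1].
have nV : is_normal_subgroup L V.
  split; first split.
  - by split; rewrite ?ginv1; exact: nbhs_singleton S1.
  - split; first by move=> a b [? ?] [? ?]; split; [apply: SM|rewrite ginvM; apply: SM].
    by move=> a [? ?]; split; rewrite ?ginvK.
  - move=> x h [Sh Sh']; rewrite -gmulA -[_ * (_ * _)]/(gconj L h x).
    by split; [exact: SJ|rewrite -gconjV; exact: SJ].
exists V; split => //; last by move=> y [/SD /DW].
apply: (nbhs1_subgroup_open tg nV.1); apply: filterI; first exact: S1.
have idV : (fun y => y^-1) @ 1 --> 1.
  by rewrite -[X in _ --> X]ginv1; apply: (cvgVg tg (f := id)); exact: cvg_id.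
by have := idV _ S1.
Qed.

Lemma closure_subgroup_coset (H : set T) x : is_subgroup L H ->
  (forall V, open V -> is_normal_subgroup L V -> exists2 h, H h & V (h^-1 * x)) ->
  closure H x.
Proof.
move=> sH HV B Bx.
have xB : nbhs 1 [set y | B (x * y)].
  have : (fun y => x * y) @ 1 --> x.
    rewrite -[X in _ --> X](gmul1 L x).
    by apply: (cvgMg tg (f := fun=> x) (g := id)); [exact: cvg_cst|exact: cvg_id].
  exact.
have [V [oV nV VB]] := open_normal_subgroup_sub xB.
have [h Hh Vh] := HV V oV nV.
exists h; split => //.
by have := VB _ (subgroupV nV.1 Vh); rewrite /= ginvM ginvK gmulKVg.
Qed.

End Profinite.

Section CosetPermutation.
Context {T : topologicalType} (L : group_law T).
Local Notation "x * y" := (gmul L x y).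
Local Notation "x ^-1" := (ginv L x).
Local Notation "1" := (gone L).
Variables (V : set T) (n : nat) (s : seq T).
Hypothesis nV : is_normal_subgroup L V.
Hypothesis s_uniq : forall i j, (i < n)%N -> (j < n)%N -> V ((nth 1 s i)^-1 * nth 1 s j) -> i = j.
Hypothesis s_cover : forall x, exists2 i, (i < n)%N & V ((nth 1 s i)^-1 * x).
Local Notation r i := (nth 1 s (nat_of_ord i)).

Lemma exists_coset_index x : exists i : 'I_n, V ((r i)^-1 * x).
Proof. by have [i ltin Vi] := s_cover x; exists (Ordinal ltin). Qed.

Definition coset_index x : 'I_n := proj1_sig (cid (exists_coset_index x)).

Lemma coset_indexP x : V ((r (coset_index x))^-1 * x).
Proof. exact: proj2_sig (cid (exists_coset_index x)). Qed.

Lemma coset_index_eq x i : V ((r i)^-1 * x) -> coset_index x = i.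
Proof.
move=> Vx; apply/val_inj/s_uniq; [exact: ltn_ord|exact: ltn_ord|].
exact: subgroup_divr nV.1 (coset_indexP x) Vx.
Qed.

Lemma coset_act_inj x : injective (fun i : 'I_n => coset_index (x^-1 * r i)).
Proof.
move=> i j eij; apply/val_inj/s_uniq; [exact: ltn_ord|exact: ltn_ord|].
have Vi := coset_indexP (x^-1 * r i); rewrite eij in Vi.
have := subgroup_divl nV.1 Vi (coset_indexP (x^-1 * r j)).
by rewrite ginvM ginvK -!gmulA gmulKVg.
Qed.

(* The action of x^-1 on the cosets (nth 1 s i) V; it represents G/V as a
   permutation group with kernel V. *)
Definition coset_perm x : {perm 'I_n} := perm (@coset_act_inj x).

Lemma coset_permE x i : coset_perm x i = coset_index (x^-1 * r i).
Proof. by rewrite permE. Qed.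

Lemma coset_permM x y : coset_perm (x * y) = (coset_perm x * coset_perm y)%g.
Proof.
apply/permP => i; rewrite permM !coset_permE; apply: coset_index_eq.
have := subgroupM nV.1 (coset_indexP (y^-1 * r (coset_index (x^-1 * r i))))
  (coset_indexP (x^-1 * r i)).
by rewrite ginvM -!gmulA gmulKVg.
Qed.

Lemma coset_perm_ker x : coset_perm x = 1%g <-> V x.
Proof.
split=> [x1|Vx]; last first.
  apply/permP => i; rewrite coset_permE perm1; apply: coset_index_eq.
  by apply: (normal_gconj _ nV); apply: subgroupV nV.1 _.
set i := coset_index 1.
have := coset_indexP (x^-1 * r i); rewrite -coset_permE x1 perm1 => Vi.
have := normal_gconj (r i)^-1 nV Vi; rewrite /gconj ginvK !gmulA gmulgK gmulV g1mul.
exact: subgroupVr nV.1.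
Qed.

Lemma coset_perm1 : coset_perm 1 = 1%g.
Proof. by apply/coset_perm_ker; apply: subgroup1 nV.1. Qed.

Lemma coset_permV x : coset_perm x^-1 = (coset_perm x)^-1%g.
Proof. by apply: (mulgI (coset_perm x)); rewrite -coset_permM gmulV coset_perm1 mulgV. Qed.

Lemma coset_perm_eq x y : coset_perm x = coset_perm y <-> V (x^-1 * y).
Proof.
rewrite -coset_perm_ker coset_permM coset_permV; split=> [->|xy]; first by rewrite mulVg.
by apply: (mulgI (coset_perm x)^-1%g); rewrite xy mulVg.
Qed.

Lemma coset_perm_pow x k : coset_perm (gpow L x k) = (coset_perm x ^+ k)%g.
Proof. by elim: k => [|k IH] /=; rewrite ?coset_perm1 // coset_permM IH expgS. Qed.

Definition perm_image (S : set T) : {set {perm 'I_n}} :=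
  [set q | `[< exists2 x, S x & coset_perm x = q >]].

Lemma perm_imageP S q : reflect (exists2 x, S x & coset_perm x = q) (q \in perm_image S).
Proof. by rewrite inE; exact: asboolP. Qed.

Lemma mem_perm_image S x : S x -> coset_perm x \in perm_image S.
Proof. by move=> Sx; apply/perm_imageP; exists x. Qed.

Lemma perm_image_subset S1 S2 : S1 `<=` S2 -> perm_image S1 \subset perm_image S2.
Proof.
by move=> S12; apply/fintype.subsetP => q /perm_imageP [x /S12 S2x <-]; exact: mem_perm_image.
Qed.

Lemma group_set_perm_image S : is_subgroup L S -> group_set (perm_image S).
Proof.
move=> sS; apply/group_setP; split.
  by rewrite -coset_perm1; apply: mem_perm_image; exact: subgroup1.
move=> _ _ /perm_imageP [x Sx <-] /perm_imageP [y Sy <-].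
by rewrite -coset_permM; apply: mem_perm_image; exact: subgroupM.
Qed.

Canonical perm_image_group S (sS : is_subgroup L S) := Group (group_set_perm_image sS).

Lemma card_perm_image_setT : #|perm_image setT| = n.
Proof.
have -> : perm_image setT = [set coset_perm (r i) | i : 'I_n].
  apply/setP => q; apply/idP/idP; last by move=> /imsetP [i _ ->]; exact: mem_perm_image.
  move=> /perm_imageP [x _ <-]; apply/imsetP; exists (coset_index x) => //.
  apply/coset_perm_eq/(subgroupVr nV.1).
  by rewrite ginvM ginvK; exact: coset_indexP.
rewrite card_imset ?card_ord // => i j /coset_perm_eq Vij.
by apply/val_inj/s_uniq => //; exact: ltn_ord.
Qed.

End CosetPermutation.

Section Frattini.
Local Open Scope group_scope.
Variables (gT : finGroupType) (p : nat) (P K : {group gT}).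
Hypotheses (pP : p.-group P) (sKP : K \subset P).

Lemma Phi_joing_normal : P \subset 'N(K <*> 'Phi(P)).
Proof.
apply/normal_norm/sub_der1_normal; last by rewrite join_subG sKP Phi_sub.
apply: fintype.subset_trans (joing_subr K _).
by rewrite (Phi_joing pP) joing_subl.
Qed.

Lemma expg_Phi a : a \in P -> a ^+ p \in 'Phi(P).
Proof.
move=> aP; rewrite (Phi_joing pP); apply: (fintype.subsetP (joing_subr _ _)).
by have := Mho_p_elt 1 aP (mem_p_elt pP aP); rewrite expn1.
Qed.

Lemma Phi_joing_sub : P \subset K <*> 'Phi(P) -> P \subset K.
Proof.
move=> sPKPhi; have : 'Phi(P) <*> K = P.
  apply/eqP; rewrite finset.eqEsubset joingC sPKPhi andbT.
  by rewrite join_subG sKP Phi_sub.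
by move/Phi_nongen; rewrite genGid => ->.
Qed.

End Frattini.

Section NormalCore.
Context {T : topologicalType} (L : group_law T).
Local Notation "x * y" := (gmul L x y).
Local Notation "1" := (gone L).

Definition normal_core (S : set T) : set T := [set y | forall z, S (gconj L y z)].

Lemma normal_core_sub S : normal_core S `<=` S.
Proof. by move=> y /(_ 1); rewrite gconj1. Qed.

Lemma normal_core_normal S : is_subgroup L S -> is_normal_subgroup L (normal_core S).
Proof.
move=> sS; split; first split.
- by move=> z; rewrite /gconj g1mul gVmul; exact: subgroup1.
- split; first by move=> a b Sa Sb z; rewrite gconjM; exact: subgroupM.
  by move=> a Sa z; rewrite gconjV; exact: subgroupV.
- by move=> x y Sy z; rewrite -gmulA -[_ * (_ * _)]/(gconj L y x) -gconjJ; exact: Sy.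
Qed.

Lemma closed_normal_core S : is_topological_group L -> closed S -> closed (normal_core S).
Proof.
move=> tg clS; have -> : normal_core S = \bigcap_(z in [set: T]) (gconj L ^~ z @^-1` S).
  by apply/seteqP; split => [y Sy z _|y Sy z]; [exact: Sy|exact: Sy z I].
apply: closed_bigI => z _.
by move/continuous_closedP: (@continuous_gconj _ _ tg z); apply.
Qed.

Lemma sub_closed_normal_closure A : A `<=` closed_normal_closure L A.
Proof. by move=> x Ax N [_ [_ AN]]; exact: AN. Qed.

Lemma closed_normal_closure_min A N : is_normal_subgroup L N -> closed N -> A `<=` N ->
  closed_normal_closure L A `<=` N.
Proof. by move=> nN clN AN x; apply; split. Qed.

End NormalCore.

Section FrattiniClosure.
Context {T : topologicalType} (L : group_law T).
Local Notation "x * y" := (gmul L x y).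
Local Notation "x ^-1" := (ginv L x).
Local Notation "1" := (gone L).
Hypothesis tg : is_topological_group L.
Hypothesis cT : compact [set: T].
Hypothesis hT : hausdorff_space T.
Hypothesis tdT : totally_disconnected [set: T].
Variable p : nat.
Hypothesis p_prime : prime p.
Hypothesis p_index : forall V, open V -> is_normal_subgroup L V ->
  exists k, has_index L V (p ^ k).
Variables (U H : set T) (h : T).
Hypotheses (oU : open U) (nU : is_normal_subgroup L U).
Hypotheses (sH : is_subgroup L H) (sHU : H `<=` U).
Hypothesis U_sub : forall x, U x ->
  exists2 y, closure H y & closed_normal_closure L [set h] (y^-1 * x).
Hypothesis h_conj : forall z,
  (exists y c, [/\ H c, U y & gconj L h z = y * (c * y^-1)]) \/
  (exists w, U w /\ gconj L h z = gpow L w p).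

Section FiniteQuotient.
Variables (V : set T) (k : nat) (s : seq T).
Hypotheses (oV : open V) (nV : is_normal_subgroup L V).
Hypothesis s_uniq : forall i j, (i < p ^ k)%N -> (j < p ^ k)%N ->
  V ((nth 1 s i)^-1 * nth 1 s j) -> i = j.
Hypothesis s_cover : forall x, exists2 i, (i < p ^ k)%N & V ((nth 1 s i)^-1 * x).
Local Notation psi := (coset_perm nV s_uniq s_cover).
Local Notation P := (perm_image_group nV s_uniq s_cover nU.1).
Local Notation K := (perm_image_group nV s_uniq s_cover sH).

Lemma pgroup_perm_image : (p.-group P)%g.
Proof.
apply: (pgroupS (G := perm_image_group nV s_uniq s_cover (setT_subgroup L))).
  exact: perm_image_subset.
by rewrite /pgroup /= card_perm_image_setT pnatX pnat_id.
Qed.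

Lemma perm_image_sub_Phi_join : (P \subset K <*> 'Phi(P))%g.
Proof.
set M := (K <*> 'Phi(P))%G.
(* Mt, the preimage of M in U, is open; its normal core is closed, normal and
   contains h, hence N, so Mt contains U. *)
have sKP : (K \subset P)%g := perm_image_subset nV s_uniq s_cover sHU.
have KM := fintype.subsetP (joing_subl K 'Phi(P))%G.
pose Mt := [set y | U y /\ psi y \in M].
have sMt : is_subgroup L Mt.
  split; first by split; [exact: subgroup1 nU.1|rewrite coset_perm1 group1].
  split=> [a b [Ua Ma] [Ub Mb]|a [Ua Ma]]; split.
  - exact: subgroupM nU.1 Ua Ub.
  - by rewrite coset_permM groupM.
  - exact: subgroupV nU.1 Ua.
  - by rewrite coset_permV groupV.
have clMt : closed Mt.
  apply: (open_subgroup_closed tg sMt); apply: (nbhs1_subgroup_open tg sMt).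
  have : nbhs 1 (V `&` U).
    apply: filterI; apply: open_nbhs_nbhs; split => //.
      exact: subgroup1 nV.1.
    exact: subgroup1 nU.1.
  by apply: filterS => y [Vy Uy]; split; rewrite // (coset_perm_ker _ _ _ y).2 // group1.
have Ch : normal_core L Mt h.
  move=> z; case: (h_conj z) => [[y [c [Hc Uy ->]]]|[w [Uw ->]]].
    split; first by apply: subgroupM nU.1 Uy (subgroupM nU.1 (sHU Hc) (subgroupV nU.1 Uy)).
    have Mc : psi c \in M by apply: KM; exact: mem_perm_image.
    have NMy : (psi y)^-1%g \in 'N(M)%g.
      rewrite groupV; apply: (fintype.subsetP (Phi_joing_normal pgroup_perm_image sKP)).
      exact: mem_perm_image.
    by rewrite !coset_permM coset_permV -{1}(invgK (psi y)) -conjgE memJ_norm.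
  split; first exact: subgroup_pow nU.1 Uw.
  rewrite coset_perm_pow; apply: (fintype.subsetP (joing_subr K _)).
  by apply: (expg_Phi pgroup_perm_image); exact: mem_perm_image.
have NMt : closed_normal_closure L [set h] `<=` Mt.
  apply: subset_trans (@normal_core_sub _ L Mt); apply: closed_normal_closure_min.
  - exact: normal_core_normal.
  - exact: closed_normal_core.
  - by move=> _ ->.
have HMt : closure H `<=` Mt.
  rewrite [X in _ `<=` X](closure_id Mt).1 //; apply: closureS => y Hy.
  by split; [exact: sHU|apply: KM; exact: mem_perm_image].
apply/fintype.subsetP => _ /perm_imageP [x Ux <-]; have [y Hy Ny] := U_sub Ux.
by have [] := subgroupM sMt (HMt _ Hy) (NMt _ Ny); rewrite gmulKVg.
Qed.

End FiniteQuotient.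

Lemma frattini_sub_closure : U `<=` closure H.
Proof.
move=> x Ux; apply: (closure_subgroup_coset tg cT hT tdT sH) => V oV nV.
have [k [s [_ [s_uniq s_cover]]]] := p_index oV nV.
have PK := Phi_joing_sub (perm_image_subset nV s_uniq s_cover sHU)
  (perm_image_sub_Phi_join oV nV s_uniq s_cover).
have /perm_imageP [y Hy /coset_perm_eq Vyx] :=
  fintype.subsetP PK _ (mem_perm_image nV s_uniq s_cover Ux).
by exists y.
Qed.

End FrattiniClosure.

Section ConjugatesOfPower.
Context {T : topologicalType} (L : group_law T).
Local Notation "x * y" := (gmul L x y).
Local Notation "x ^-1" := (ginv L x).
Local Notation "1" := (gone L).
Variable p : nat.
Hypothesis p_prime : prime p.
Variables (U : set T) (e : nat) (s : seq T).
Hypothesis nU : is_normal_subgroup L U.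
Hypothesis s_uniq : forall i j, (i < p ^ e)%N -> (j < p ^ e)%N ->
  U ((nth 1 s i)^-1 * nth 1 s j) -> i = j.
Hypothesis s_cover : forall x, exists2 i, (i < p ^ e)%N & U ((nth 1 s i)^-1 * x).
Variables (g : T) (k : nat).
Local Notation psi := (coset_perm nU s_uniq s_cover).
Local Notation GT := (perm_image_group nU s_uniq s_cover (setT_subgroup L)).
Local Notation h := (gpow L g (p ^ k)).

Lemma gconj_pow_small_order : (#[psi g]%g < p ^ k)%N ->
  forall z, exists w, U w /\ gconj L h z = gpow L w p.
Proof.
move=> lt_gk z.
have : (#[psi g]%g %| #|GT|)%N by rewrite order_dvdG //; exact: mem_perm_image.
rewrite card_perm_image_setT; case/(dvdn_pfactor _ _ p_prime) => i _ gi.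
move: lt_gk; rewrite gi ltn_exp2l ?prime_gt1 // => lt_ik.
have kS : k = k.-1.+1 by rewrite prednK // (leq_ltn_trans _ lt_ik).
have Ug : U (gpow L g (p ^ k.-1)).
  apply/(coset_perm_ker nU s_uniq s_cover); rewrite coset_perm_pow; apply/eqP.
  by rewrite -order_dvdn gi dvdn_exp2l // -ltnS -kS.
exists (gconj L (gpow L g (p ^ k.-1)) z); split; first exact: normal_gconj.
by rewrite kS expnSr gpowM gconj_pow.
Qed.

Hypothesis Uh : U h.

Lemma gconj_pow_transversal : (p ^ k <= #[psi g]%g)%N ->
  exists c : seq T, [/\ (size c * p ^ k <= p ^ e)%N, {subset c <= U} &
    forall z, exists y c0, [/\ c0 \in c, U y & gconj L h z = y * (c0 * y^-1)]].
Proof.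
(* c lists the conjugates of h by lifts of a transversal of <psi g> in G/U;
   since h commutes with g, a preliminary conjugation by a power of g is
   harmless. *)
move=> le_kg; pose A := <[psi g]>%G.
have AG : (A \subset GT)%g by rewrite cycle_subG; exact: mem_perm_image.
have lift_ex (q : {perm 'I_(p ^ e)}) : exists x, q \in GT -> psi x = q.
  by case: (boolP (q \in GT)) => [/perm_imageP [x _ <-]|_]; [exists x|exists 1].
have [lift liftE] := choice lift_ex.
pose c := [seq gconj L h (lift (repr X)) | X <- enum (rcosets A GT)].
exists c; split.
- rewrite size_map -cardE; apply: (@leq_trans #|GT|); last first.
    by rewrite card_perm_image_setT.
  by rewrite -(Lagrange AG) mulnC leq_mul.
- by move=> _ /mapP [X _ ->]; rewrite inE; exact: normal_gconj.
move=> z; set X := (A :* psi z)%g.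
have zG : psi z \in GT by exact: mem_perm_image.
have rX : repr X \in X by apply: mem_repr_rcoset.
have rG : repr X \in GT.
  by case/rcosetP: rX => b bA ->; rewrite groupM // (fintype.subsetP AG).
set r := lift (repr X); have rE : psi r = repr X by exact: liftE.
have : psi z \in (A :* repr X)%g by rewrite (rcoset_eqP rX) rcoset_refl.
case/rcosetP => _ /cycleP [j ->] psi_zE.
set w := gpow L g j * r; set v := w^-1 * z.
have Uv : U v.
  by apply/(coset_perm_eq nU s_uniq s_cover); rewrite coset_permM coset_perm_pow rE -psi_zE.
exists v^-1, (gconj L h r); split.
- by apply/mapP; exists X; rewrite ?mem_enum // mem_rcosets mulSGid.
- exact: subgroupV nU.1 Uv.
have zE : z = w * v by rewrite /v gmulKVg.
clearbody v; rewrite zE ginvK !gconjJ (@gconj_commute _ _ h) //.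
exact: gpowC.
Qed.

Lemma gconj_pow_dichotomy : exists c : seq T, [/\ (size c * p ^ k <= p ^ e)%N, {subset c <= U} &
  forall z, (exists y c0, [/\ c0 \in c, U y & gconj L h z = y * (c0 * y^-1)]) \/
            (exists w, U w /\ gconj L h z = gpow L w p)].
Proof.
case: (leqP (p ^ k) #[psi g]%g) => [/gconj_pow_transversal [c [c_size cU c_conj]]|lt_gk].
  by exists c; split => // z; left.
by exists [::]; split => //= z; right; exact: gconj_pow_small_order.
Qed.

End ConjugatesOfPower.

Lemma inf_natr_ge0 (R : realType) (S : set nat) : 0 <= inf [set (n%:R : R) | n in S].
Proof.
have [[x Sx]|S0] := pselect ([set (n%:R : R) | n in S] !=set0).
  by apply: lb_le_inf; [exists x|move=> _ [n _ <-]; exact: ler0n].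
have -> : [set (n%:R : R) | n in S] = set0.
  by apply/seteqP; split => // x Sx; apply: S0; exists x.
by rewrite inf0.
Qed.

Section IndexAndRank.
Context {T : topologicalType} (L : group_law T).
Local Notation "x * y" := (gmul L x y).
Local Notation "x ^-1" := (ginv L x).
Local Notation "1" := (gone L).

Lemma has_index_le U m n : is_subgroup L U -> has_index L U m -> has_index L U n -> (m <= n)%N.
Proof.
move=> sU [s [_ [s_uniq _]]] [t [_ [_ t_cover]]].
have ex_j (i : 'I_m) : exists j : 'I_n, U ((nth 1 t j)^-1 * nth 1 s i).
  by have [j ltjn Uj] := t_cover (nth 1 s i); exists (Ordinal ltjn).
have [f fP] := choice ex_j.
suff /leq_card : injective f by rewrite !card_ord.
move=> i j fij; apply/val_inj/s_uniq; [exact: ltn_ord|exact: ltn_ord|].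
by apply: subgroup_divl sU (fP i) _; rewrite fij; exact: fP.
Qed.

Lemma has_index_index U n : is_subgroup L U -> has_index L U n -> Defs.index L U = n%:R.
Proof.
move=> sU Un; rewrite /Defs.index.
suff -> : [set (m%:R : Rdefinitions.R) | m in [set m | has_index L U m]] = [set n%:R].
  exact: inf1.
apply/seteqP; split => [_ [m Um <-]|_ ->]; last by exists n.
by rewrite /= (@anti_leq m n) // (has_index_le sU Um Un) (has_index_le sU Un Um).
Qed.

Lemma dgen_ge0 U : 0 <= dgen L U.
Proof. exact: inf_natr_ge0. Qed.

Lemma dgen_le_size U s : top_generated_by L U s -> dgen L U <= (size s)%:R.
Proof.
move=> Us; apply: ge_inf; last by exists (size s) => //; exists s.
by exists 0 => _ [n _ <-]; exact: ler0n.
Qed.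

Lemma dgen_not_generated U : ~ (exists s, top_generated_by L U s) -> dgen L U = 0.
Proof.
move=> nUs; rewrite /dgen; set S := [set n : nat | _].
suff -> : S = set0 by rewrite image_set0 inf0.
by apply/seteqP; split => // n [s [_ Us]]; apply: nUs; exists s.
Qed.

Lemma dgen_ge U (t : Rdefinitions.R) : (exists s, top_generated_by L U s) ->
  (forall s, top_generated_by L U s -> t <= (size s)%:R) -> t <= dgen L U.
Proof.
move=> [s Us] t_le; apply: lb_le_inf; first by exists (size s)%:R, (size s) => //; exists s.
by move=> _ [n [s' [<- Us']] <-]; exact: t_le.
Qed.

Lemma rank_gradient_le U : open U -> is_normal_subgroup L U ->
  rank_gradient L <= dgen L U / Defs.index L U.
Proof.
move=> oU nU; apply: ge_inf; last by exists U.
by exists 0 => _ [V _ <-]; apply: divr_ge0; [exact: dgen_ge0|exact: inf_natr_ge0].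
Qed.

Lemma top_generated_of_sub_closure U s : is_topological_group L ->
  open U -> is_subgroup L U -> {subset s <= U} ->
  U `<=` closure (gen_subgroup L [set x | x \in s]) -> top_generated_by L U s.
Proof.
move=> tg oU sU sU_ U_cl; split => //; apply/seteqP; split => //.
rewrite [X in _ `<=` X]((closure_id U).1 (open_subgroup_closed tg sU oU)).
by apply: closureS; apply: gen_subgroup_min sU _ => x /sU_; rewrite inE.
Qed.

End IndexAndRank.

Lemma closure_image {A B : topologicalType} (f : A -> B) (S : set A) x :
  continuous f -> closure S x -> closure (f @` S) (f x).
Proof.
move=> cf Sx W fxW; have [a [Sa Wa]] := Sx _ (cf x W fxW).
by exists (f a); split => //; exists a.
Qed.

Section Quotient.
Context {G Q : topologicalType} (LG : group_law G) (LQ : group_law Q).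
Variable pi : G -> Q.
Hypothesis pi_hom : is_group_hom LG LQ pi.
Hypothesis pi_cont : continuous pi.
Hypothesis pi_surj : forall q, exists x, pi x = q.

Lemma has_index_preimage (Ub : set Q) n : has_index LG (pi @^-1` Ub) n -> has_index LQ Ub n.
Proof.
move=> [s [s_size [s_uniq s_cover]]]; exists (map pi s); split; first by rewrite size_map.
split=> [i j ltin ltjn|q].
  by rewrite !(nth_map (gone LG)) ?s_size // -(homV pi_hom) -pi_hom; exact: s_uniq.
have [x <-] := pi_surj q; have [i ltin Ui] := s_cover x.
by exists i; rewrite // (nth_map (gone LG)) ?s_size // -(homV pi_hom) -pi_hom.
Qed.

Lemma top_generated_image (Ub : set Q) s : is_topological_group LQ ->
  open Ub -> is_subgroup LQ Ub ->
  top_generated_by LG (pi @^-1` Ub) s -> top_generated_by LQ Ub (map pi s).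
Proof.
move=> tgQ oUb sUb [sU U_cl]; apply: top_generated_of_sub_closure => //.
  by move=> _ /mapP [x xs ->]; move: (sU x xs); rewrite !inE.
move=> q Ubq; have [x xq] := pi_surj q.
have : closure (pi @` gen_subgroup LG [set z | z \in s]) q.
  by rewrite -xq; apply: closure_image pi_cont _; rewrite U_cl /= xq.
apply: closureS.
move=> q' /(image_gen_subgroup pi_hom); apply: gen_subgroupS.
by move=> _ [y ys <-]; apply/mapP; exists y.
Qed.

Hypothesis cG : compact [set: G].
Hypothesis hQ : hausdorff_space Q.

Lemma lift_top_generators (Ub : set Q) sb : top_generated_by LQ Ub sb ->
  exists u : seq G, [/\ size u = size sb, {subset u <= pi @^-1` Ub} &
    forall x, (pi @^-1` Ub) x -> exists2 y, closure (gen_subgroup LG [set z | z \in u]) y &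
      pi (gmul LG (ginv LG y) x) = gone LQ].
Proof.
move=> [sbU sb_cl]; have [f fK] := choice pi_surj.
exists (map f sb); split; first by rewrite size_map.
  by move=> _ /mapP [q qs ->]; rewrite inE /= fK; move: (sbU q qs); rewrite inE.
move=> x Ux; set K := closure (gen_subgroup LG [set z | z \in map f sb]).
have clK : closed K := @closed_closure _ _.
have clpiK : closed (pi @` K).
  have cK : compact K := subclosed_compact clK cG (@subsetT _ K).
  by apply: compact_closed => //; apply: continuous_compact cK; exact: continuous_subspaceT.
have UbK : Ub `<=` pi @` K.
  rewrite -sb_cl [X in _ `<=` X]((closure_id _).1 clpiK); apply: closureS.
  have sb_f : [set` sb] `<=` pi @` [set` map f sb].
    by move=> q qs; exists (f q); [apply/mapP; exists q|exact: fK].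
  move=> q /(gen_subgroupS sb_f)/(gen_subgroup_image pi_hom) [y Ky <-].
  by exists y => //; exact: subset_closure.
have [y Ky yx] := UbK _ Ux.
by exists y => //; rewrite pi_hom (homV pi_hom) yx gVmul.
Qed.

End Quotient.

Section RankOfPreimage.
Context {G Q : topologicalType} (LG : group_law G) (LQ : group_law Q).
Variable p : nat.
Hypothesis p_prime : prime p.
Hypotheses (tgG : is_topological_group LG) (cG : compact [set: G]).
Hypotheses (hG : hausdorff_space G) (tdG : totally_disconnected [set: G]).
Hypothesis p_index : forall V, open V -> is_normal_subgroup LG V ->
  exists e, has_index LG V (p ^ e).
Variables (g : G) (k : nat) (pi : G -> Q).
Hypotheses (pi_hom : is_group_hom LG LQ pi) (pi_cont : continuous pi).
Hypothesis pi_surj : forall q, exists x, pi x = q.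
Hypotheses (tgQ : is_topological_group LQ) (hQ : hausdorff_space Q).
Hypothesis pi_ker : [set x | pi x = gone LQ] = closed_normal_closure LG [set gpow LG g (p ^ k)].
Variables (Ub : set Q) (e : nat).
Hypotheses (oUb : open Ub) (nUb : is_normal_subgroup LQ Ub).
Local Notation U := (pi @^-1` Ub).
Local Notation h := (gpow LG g (p ^ k)).

Lemma open_preimage : open U.
Proof. by move/continuousP: pi_cont; apply. Qed.

Lemma preimage_pow_mem : U h.
Proof.
have : [set x | pi x = gone LQ] h by rewrite pi_ker; exact: sub_closed_normal_closure.
by rewrite /= => ->; exact: subgroup1 nUb.1.
Qed.

Section Transversal.
Variable c : seq G.
Hypothesis cU : {subset c <= U}.
Hypothesis c_conj : forall z,
  (exists y c0, [/\ c0 \in c, U y & gconj LG h z = gmul LG y (gmul LG c0 (ginv LG y))]) \/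
  (exists w, U w /\ gconj LG h z = gpow LG w p).

Lemma top_generated_preimage sb : top_generated_by LQ Ub sb ->
  exists2 u, size u = size sb & top_generated_by LG U (u ++ c).
Proof.
move=> Ub_sb; have [u [u_size uU U_u]] := lift_top_generators pi_hom pi_cont pi_surj cG hQ Ub_sb.
exists u => //; have nU := preimage_normal pi_hom nUb.
have ucU : {subset u ++ c <= U} by move=> x; rewrite mem_cat => /orP [/uU|/cU].
have HU : gen_subgroup LG [set` u ++ c] `<=` U.
  by apply: gen_subgroup_min nU.1 _ => x /ucU; rewrite inE.
apply: (top_generated_of_sub_closure tgG open_preimage nU.1 ucU).
apply: (frattini_sub_closure tgG cG hG tdG p_prime p_index (h := h) open_preimage nU
  (gen_subgroup_subgroup _ _) HU).
- move=> x /U_u [y y_cl ker_yx]; exists y; last by rewrite -pi_ker.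
  by apply: closureS y_cl; apply: gen_subgroupS => z /=; rewrite mem_cat => ->.
- move=> z; case: (c_conj z) => [[y [c0 [c0c Uy ->]]]|]; last by right.
  left; exists y, c0; split => //; apply: sub_gen_subgroup => /=.
  by rewrite mem_cat c0c orbT.
Qed.

Lemma dgen_preimage_le_size : dgen LG U <= dgen LQ Ub + (size c)%:R.
Proof.
(* If U is not finitely generated, dgen returns the junk value 0. *)
case: (pselect (exists s, top_generated_by LG U s)) => [[s U_s]|U_nfg]; last first.
  by rewrite dgen_not_generated // addr_ge0 // dgen_ge0.
rewrite -lerBlDr; apply: dgen_ge.
  by exists (map pi s); apply: (top_generated_image pi_hom pi_cont pi_surj tgQ oUb nUb.1 U_s).
move=> sb /top_generated_preimage [u u_size /dgen_le_size].
by rewrite size_cat u_size natrD lerBlDr.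
Qed.

End Transversal.

Lemma dgen_preimage_le : has_index LG U (p ^ e) ->
  dgen LG U <= dgen LQ Ub + (p ^ e)%:R / (p ^ k)%:R.
Proof.
move=> [s [_ [s_uniq s_cover]]].
have nU := preimage_normal pi_hom nUb.
have [c [c_size cU c_conj]] := gconj_pow_dichotomy p_prime nU s_uniq s_cover preimage_pow_mem.
apply: (le_trans (dgen_preimage_le_size cU c_conj)); rewrite lerD2l.
by rewrite ler_pdivlMr ?ltr0n ?expn_gt0 ?prime_gt0 // -natrM ler_nat.
Qed.

End RankOfPreimage.

Theorem proposition2p1 (p : nat) (hp : prime p)
  (G : topologicalType) (LG : group_law G)
  (HG : pro_p_group LG p) (Hfg : top_finitely_generated LG)
  (g : G) (k : nat)
  (Q : topologicalType) (LQ : group_law Q)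
  (HQtop : is_topological_group LQ) (HQhaus : hausdorff_space Q)
  (pi : G -> Q) (Hhom : is_group_hom LG LQ pi) (Hcont : continuous pi)
  (Hsurj : forall q : Q, exists x : G, pi x = q)
  (Hker : [set x : G | pi x = gone LQ]
          = closed_normal_closure LG [set gpow LG g (p ^ k)%N]) :
  rank_gradient LQ >= rank_gradient LG - 1 / ((p ^ k)%N%:R).
Proof.
case: HG => tgG cG hG tdG p_index.
apply: lb_le_inf => [|_ [Ub [oUb nUb] <-]].
  by exists (dgen LQ setT / Defs.index LQ setT), setT; split; [exact: openT|split].
have oU := open_preimage Hcont oUb; have nU := preimage_normal Hhom nUb.
have [e iU] := p_index _ oU nU.
have pe_gt0 : 0 < (p ^ e)%:R :> Rdefinitions.R by rewrite ltr0n expn_gt0 prime_gt0.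
rewrite (has_index_index nUb.1 (has_index_preimage Hhom Hsurj iU)) lerBlDr.
apply: (le_trans (rank_gradient_le oU nU)); rewrite (has_index_index nU.1 iU).
rewrite ler_pdivrMr // mulrDl divfK ?gt_eqF // mul1r mulrC.
exact: (dgen_preimage_le hp tgG cG hG tdG p_index Hhom Hcont Hsurj HQtop HQhaus Hker oUb nUb iU).
Qed.
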